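(* Let $(G_1,\oplus_1,\otimes_1)$ and $(G_2,\oplus_2,\otimes_2)$ be generalized gyrovector spaces (GGV's), with gyrometrics $\varrho_1$ and $\varrho_2$ respectively. Suppose $T:G_1\to G_2$ is a surjection that preserves the gyrometric, i.e. $\varrho_2(T\mathbf a,T\mathbf b)=\varrho_1(\mathbf a,\mathbf b)$ for all $\mathbf a,\mathbf b\in G_1$. Then $T$ preserves gyromidpoints: for all $\mathbf a,\mathbf b\in G_1$, \[\mathbf p_2(T\mathbf a,T\mathbf b)=T\,\mathbf p_1(\mathbf a,\mathbf b),\] where $\mathbf p_i$ denotes the gyromidpoint in $G_i$.
   Context: A gyrogroup $(G,\oplus)$ is a set with a binary operation $\oplus$ such that: there is $e\in G$ with $e\oplus a=a$ for all $a$; each $a$ has $\ominus a$ with $\ominus a\oplus a=e$; for all $a,b$ there is an automorphism $\mathrm{gyr}[a,b]$ of $(G,\oplus)$ with $a\oplus(b\oplus c)=(a\oplus b)\oplus\mathrm{gyr}[a,b]c$ for all $c$ (left gyroassociativity); and $\mathrm{gyr}[a,b]=\mathrm{gyr}[a\oplus b,b]$ (left loop property). It is gyrocommutative if $a\oplus b=\mathrm{gyr}[a,b](b\oplus a)$. Write $a\ominus b=a\oplus(\ominus b)$. A generalized gyrovector space (GGV) $(G,\oplus,\otimes)$ consists of a gyrocommutative gyrogroup $(G,\oplus)$, a map $\otimes:\mathbb R\times G\to G$, and an injection $\phi$ of $G$ into a real normed space $(V,\|\cdot\|)$ such that for all $a,b,u,v\in G$ and $r,r_1,r_2\in\mathbb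 R$: (GGV0) $\|\phi(\mathrm{gyr}[u,v]a)\|=\|\phi(a)\|$; (GGV1) $1\otimes a=a$; (GGV2) $(r_1+r_2)\otimes a=(r_1\otimes a)\oplus(r_2\otimes a)$; (GGV3) $(r_1r_2)\otimes a=r_1\otimes(r_2\otimes a)$; (GGV4) $\phi(|r|\otimes a)/\|\phi(r\otimes a)\|=\phi(a)/\|\phi(a)\|$ for $a\neq e$, $r\neq 0$; (GGV5) $\mathrm{gyr}[u,v](r\otimes a)=r\otimes\mathrm{gyr}[u,v]a$; (GGV6) $\mathrm{gyr}[r_1\otimes v,r_2\otimes v]$ is the identity map; (GGVV) the set $\|\phi(G)\|=\{\pm\|\phi(a)\|:a\in G\}\subset\mathbb R$ is a real one-dimensional vector space under some addition $\oplus'$ and scalar multiplication $\otimes'$; (GGV7) $\|\phi(r\otimes a)\|=|r|\otimes'\|\phi(a)\|$; (GGV8) $\|\phi(a\oplus b)\|\le\|\phi(a)\|\oplus'\|\phi(b)\|$ (usual order of $\mathbb R$). The gyrometric of a GGV is $\varrho(a,b)=\|\phi(\ominus a\oplus b)\|$. The gyromidpoint of $a,b$ is $\mathbf p(a,b)=\tfrac12\otimes(a\boxplus b)$, where $a\boxplus b=a\oplus\mathrm{gyr}[a,\ominus b]b$ is the cooperation. *)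

From Stdlib Require Import Reals.
Open Scope R_scope.

Record NormedSpace := {
  nv_car :> Type;
  nv_add : nv_car -> nv_car -> nv_car;
  nv_zero : nv_car;
  nv_opp : nv_car -> nv_car;
  nv_scal : R -> nv_car -> nv_car;
  nv_norm : nv_car -> R;
  nv_addA : forall x y z, nv_add x (nv_add y z) = nv_add (nv_add x y) z;
  nv_addC : forall x y, nv_add x y = nv_add y x;
  nv_add0 : forall x, nv_add x nv_zero = x;
  nv_addN : forall x, nv_add x (nv_opp x) = nv_zero;
  nv_scalA : forall r s x, nv_scal r (nv_scal s x) = nv_scal (r * s) x;
  nv_scal1 : forall x, nv_scal 1 x = x;
  nv_scalDr : forall r x y, nv_scal r (nv_add x y) = nv_add (nv_scal r x) (nv_scal r y);
  nv_scalDl : forall r s x, nv_scal (r + s) x = nv_add (nv_scal r x) (nv_scal s x);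
  nv_norm_eq0 : forall x, nv_norm x = 0 -> x = nv_zero;
  nv_normZ : forall r x, nv_norm (nv_scal r x) = Rabs r * nv_norm x;
  nv_normD : forall x y, nv_norm (nv_add x y) <= nv_norm x + nv_norm y
}.

(* The set ||phi(G)|| = { +- ||phi a|| : a in G } and the requirement that it
   is a real one-dimensional vector space under addp (= (+)') and mulp (= (x)'). *)
Definition one_dim_real_vs (S : R -> Prop) (addp : R -> R -> R) (mulp : R -> R -> R) : Prop :=
  (forall x y, S x -> S y -> S (addp x y)) /\
  (forall r x, S x -> S (mulp r x)) /\
  exists z, S z /\
  (forall x y w, S x -> S y -> S w -> addp x (addp y w) = addp (addp x y) w) /\
  (forall x y, S x -> S y -> addp x y = addp y x) /\
  (forall x, S x -> addp x z = x) /\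
  (forall x, S x -> exists y, S y /\ addp x y = z) /\
  (forall r s x, S x -> mulp r (mulp s x) = mulp (r * s) x) /\
  (forall x, S x -> mulp 1 x = x) /\
  (forall r x y, S x -> S y -> mulp r (addp x y) = addp (mulp r x) (mulp r y)) /\
  (forall r s x, S x -> mulp (r + s) x = addp (mulp r x) (mulp s x)) /\
  (exists v, S v /\ v <> z /\ forall x, S x -> exists r, x = mulp r v).

Record GGV (N : NormedSpace) := {
  g_car :> Type;
  g_op : g_car -> g_car -> g_car;
  g_e : g_car;
  g_inv : g_car -> g_car;
  g_gyr : g_car -> g_car -> g_car -> g_car;
  g_mul : R -> g_car -> g_car;
  g_phi : g_car -> nv_car N;
  g_addp : R -> R -> R;
  g_mulp : R -> R -> R;
  g_left_id : forall a, g_op g_e a = a;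
  g_left_inv : forall a, g_op (g_inv a) a = g_e;
  g_gyr_hom : forall a b x y, g_gyr a b (g_op x y) = g_op (g_gyr a b x) (g_gyr a b y);
  g_gyr_bij : forall a b, exists h : g_car -> g_car,
      (forall x, h (g_gyr a b x) = x) /\ (forall x, g_gyr a b (h x) = x);
  g_gyroassoc : forall a b c, g_op a (g_op b c) = g_op (g_op a b) (g_gyr a b c);
  g_loop : forall a b c, g_gyr a b c = g_gyr (g_op a b) b c;
  g_gyrocomm : forall a b, g_op a b = g_gyr a b (g_op b a);
  g_phi_inj : forall a b, g_phi a = g_phi b -> a = b;
  ggv0 : forall u v a, nv_norm N (g_phi (g_gyr u v a)) = nv_norm N (g_phi a);
  ggv1 : forall a, g_mul 1 a = a;
  ggv2 : forall r1 r2 a, g_mul (r1 + r2) a = g_op (g_mul r1 a) (g_mul r2 a);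
  ggv3 : forall r1 r2 a, g_mul (r1 * r2) a = g_mul r1 (g_mul r2 a);
  ggv4 : forall r a, a <> g_e -> r <> 0 ->
      nv_scal N (/ nv_norm N (g_phi (g_mul r a))) (g_phi (g_mul (Rabs r) a))
      = nv_scal N (/ nv_norm N (g_phi a)) (g_phi a);
  ggv5 : forall u v r a, g_gyr u v (g_mul r a) = g_mul r (g_gyr u v a);
  ggv6 : forall r1 r2 v x, g_gyr (g_mul r1 v) (g_mul r2 v) x = x;
  ggvV : one_dim_real_vs
      (fun x => exists a, x = nv_norm N (g_phi a) \/ x = - nv_norm N (g_phi a))
      g_addp g_mulp;
  ggv7 : forall r a, nv_norm N (g_phi (g_mul r a)) = g_mulp (Rabs r) (nv_norm N (g_phi a));
  ggv8 : forall a b, nv_norm N (g_phi (g_op a b))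
                     <= g_addp (nv_norm N (g_phi a)) (nv_norm N (g_phi b))
}.

Arguments g_op {N} g _ _.
Arguments g_inv {N} g _.
Arguments g_gyr {N} g _ _ _.
Arguments g_mul {N} g _ _.
Arguments g_phi {N} g _.

Definition gyrometric {N : NormedSpace} (G : GGV N) (a b : G) : R :=
  nv_norm N (g_phi G (g_op G (g_inv G a) b)).

Definition coop {N : NormedSpace} (G : GGV N) (a b : G) : G :=
  g_op G a (g_gyr G a (g_inv G b) b).

Definition gyromidpoint {N : NormedSpace} (G : GGV N) (a b : G) : G :=
  g_mul G (1 / 2) (coop G a b).

(* Väisälä's proof of the Mazur–Ulam theorem, transplanted to gyrogroups.
   Put d = ½ ⊗ (⊖a ⊕ b), so that the gyromidpoint is q = a ⊕ d, and let ψ be the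
   point reflection a ⊕ (d ⊕ w) ↦ a ⊕ (d ⊕ ⊖w).  It is an isometric involution
   exchanging a and b, it moves every x by twice its distance to q, and q is its
   only fixed point.  If g is an isometric bijection fixing a and b, then so is
   ψ g⁻¹ ψ g, and it moves q twice as far as g does.  Every such map moves q by at
   most ρ(a, b), so g fixes q.  Distances can be doubled and compared because the
   norm values form a line (GGVV, GGV7): every distance is ‖t ⊗ (⊖a ⊕ b)‖ for a
   unique t ≥ 0.  Applied to g = ψ₁ T⁻¹ ψ₂ T this gives ψ₂ (T q₁) = T q₁, that is
   T q₁ = q₂. *)

From Stdlib Require Import Reals Lra Classical ClassicalEpsilon.
Open Scope R_scope.

Notation "a ⊕ b" := (g_op _ a b) (at level 50, left associativity).
Notation "⊖ a" := (g_inv _ a) (at level 35, right associativity).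
Notation "r ⊗ x" := (g_mul _ r x) (at level 40, left associativity).
Notation gyr := (g_gyr _).
Notation nrm x := (nv_norm _ (g_phi _ x)).

Lemma pow2_scaled_bounded_eq0 (t : R) :
  0 <= t -> (forall k, 2 ^ k * t <= 1) -> t = 0.
Proof.
  intros Ht Hk. destruct (Rle_lt_or_eq_dec 0 t Ht) as [Hpos|]; [exfalso|auto].
  destruct (Pow_x_infinity 2 ltac:(rewrite Rabs_pos_eq; lra) (2 / t)) as [n Hn].
  specialize (Hn n (le_n n)). rewrite Rabs_pos_eq in Hn by (apply pow_le; lra).
  assert (2 / t * t = 2) by (field; lra).
  specialize (Hk n). nra.
Qed.

Section Gyrogroup.
Context {N : NormedSpace} (G : GGV N).
Local Notation e := (g_e N G).

Lemma gyro_addI (a x y : G) : a ⊕ x = a ⊕ y -> x = y.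
Proof.
  intro H.
  pose proof (g_gyroassoc N G (⊖a) a x) as Ex.
  pose proof (g_gyroassoc N G (⊖a) a y) as Ey.
  rewrite g_left_inv, g_left_id in Ex, Ey. rewrite H, Ey in Ex.
  destruct (g_gyr_bij N G (⊖a) a) as [h [Hh _]].
  rewrite <- (Hh x), <- (Hh y), Ex. reflexivity.
Qed.

Lemma gyr_e_l (a x : G) : gyr e a x = x.
Proof.
  pose proof (g_gyroassoc N G e a x) as E.
  rewrite !g_left_id in E. symmetry. exact (gyro_addI a _ _ E).
Qed.

Lemma gyro_addKr (a x : G) : ⊖a ⊕ (a ⊕ x) = x.
Proof.
  rewrite g_gyroassoc, g_left_inv, g_left_id, g_loop, g_left_inv. apply gyr_e_l.
Qed.

Lemma gyro_addr0 (a : G) : a ⊕ e = a.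
Proof. apply (gyro_addI (⊖a)). rewrite gyro_addKr. symmetry; apply g_left_inv. Qed.

Lemma gyro_opp_unique (x y : G) : x ⊕ y = e -> y = ⊖x.
Proof. intro H. rewrite <- (gyro_addKr x y), H, gyro_addr0. reflexivity. Qed.

Lemma gyro_scale0 (x : G) : 0 ⊗ x = e.
Proof. apply (gyro_addI (0 ⊗ x)). rewrite gyro_addr0, <- ggv2. f_equal. ring. Qed.

Lemma gyro_scale_e (r : R) : r ⊗ e = e.
Proof. rewrite <- (gyro_scale0 e), <- ggv3, Rmult_0_r. reflexivity. Qed.

Lemma gyro_scaleK (r s : R) (x : G) : r * s = 1 -> r ⊗ (s ⊗ x) = x.
Proof. intro H. rewrite <- ggv3, H. apply ggv1. Qed.

Lemma gyro_scale2 (x : G) : 2 ⊗ x = x ⊕ x.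
Proof. replace 2 with (1 + 1) by ring. rewrite ggv2, ggv1. reflexivity. Qed.

Lemma gyro_opp_scale (x : G) : ⊖x = (-1) ⊗ x.
Proof.
  symmetry. apply gyro_opp_unique.
  rewrite <- (ggv1 N G x) at 1. rewrite <- ggv2, Rplus_opp_r. apply gyro_scale0.
Qed.

Lemma gyro_oppK (x : G) : ⊖ ⊖ x = x.
Proof. rewrite !gyro_opp_scale. apply gyro_scaleK. ring. Qed.

Lemma gyro_addNKr (a x : G) : a ⊕ (⊖a ⊕ x) = x.
Proof. rewrite <- (gyro_oppK a) at 1. apply gyro_addKr. Qed.

Lemma gyro_addrN (x : G) : x ⊕ ⊖x = e.
Proof. rewrite <- (gyro_oppK x) at 1. apply g_left_inv. Qed.

Lemma gyro_opp0 : ⊖ e = e.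
Proof. rewrite <- (gyro_addr0 (⊖e)). apply g_left_inv. Qed.

Lemma gyro_sub_eq_e (a b : G) : ⊖a ⊕ b = e -> a = b.
Proof. intro H. rewrite <- (gyro_addNKr a b), H, gyro_addr0. reflexivity. Qed.

Lemma gyr_opp (a b x : G) : gyr a b (⊖x) = ⊖ (gyr a b x).
Proof. rewrite !gyro_opp_scale. apply ggv5. Qed.

Lemma gyr_inj (a b x y : G) : gyr a b x = gyr a b y -> x = y.
Proof.
  intro H. destruct (g_gyr_bij N G a b) as [h [Hh _]].
  rewrite <- (Hh x), <- (Hh y), H. reflexivity.
Qed.

Lemma gyr_same (d x : G) : gyr d d x = x.
Proof. pose proof (ggv6 N G 1 1 d x) as H. rewrite ggv1 in H. exact H. Qed.

Lemma gyro_oppD_gyr (a b : G) : ⊖(a ⊕ b) = gyr a b (⊖b ⊕ ⊖a).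
Proof.
  symmetry. apply gyro_opp_unique.
  rewrite <- g_gyroassoc, gyro_addNKr, gyro_addrN. reflexivity.
Qed.

(* Gyrocommutativity turns the left gyroautomorphic inverse law into the
   automorphic one without the gyration. *)
Lemma gyro_oppD (a b : G) : ⊖(a ⊕ b) = ⊖a ⊕ ⊖b.
Proof.
  apply (gyr_inj b a). rewrite gyr_opp, <- g_gyrocomm. apply gyro_oppD_gyr.
Qed.

Lemma coop_gyr (a b : G) : gyr a (⊖b) b = (⊖a ⊕ b) ⊕ a.
Proof.
  assert (H : (a ⊕ ⊖b) ⊕ gyr a (⊖b) b = a)
    by (rewrite <- g_gyroassoc, g_left_inv, gyro_addr0; reflexivity).
  rewrite <- (gyro_addKr (a ⊕ ⊖b) (gyr a (⊖b) b)), H, gyro_oppD, gyro_oppK.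
  reflexivity.
Qed.

Lemma gyromidpoint_eq (a b : G) :
  gyromidpoint G a b = a ⊕ (1/2) ⊗ (⊖a ⊕ b).
Proof.
  unfold gyromidpoint, coop. rewrite coop_gyr.
  set (w := ⊖a ⊕ b). set (d := (1/2) ⊗ w).
  assert (Hd : d ⊕ d = w)
    by (unfold d; rewrite <- gyro_scale2; apply gyro_scaleK; lra).
  assert (E : a ⊕ (w ⊕ a) = 2 ⊗ (a ⊕ d)).
  { rewrite gyro_scale2. rewrite (g_gyrocomm N G a d) at 2. rewrite <- g_gyroassoc.
    f_equal. rewrite g_gyroassoc, gyr_same, Hd. reflexivity. }
  rewrite E. apply gyro_scaleK. lra.
Qed.

Lemma gyromidpoint_same (a : G) : gyromidpoint G a a = a.
Proof. rewrite gyromidpoint_eq, g_left_inv, gyro_scale_e. apply gyro_addr0. Qed.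

End Gyrogroup.

Section NormLine.
Context {N : NormedSpace} (G : GGV N).
Local Notation e := (g_e N G).
Local Notation addp := (g_addp N G).
Local Notation mulp := (g_mulp N G).

Lemma norm_line : exists v : R,
  (forall u : G, exists al, nrm u = mulp al v) /\
  (forall r s, mulp r v = mulp s v -> r = s) /\
  (forall r s, addp (mulp r v) (mulp s v) = mulp (r + s) v) /\
  (forall r s, mulp r (mulp s v) = mulp (r * s) v).
Proof.
  destruct (ggvV N G) as [HaddS [Hmul [z [Hz [Hassoc [Hcomm [Hid [Hinv
    [HmA [Hm1 [_ [HdistL [v [Hv [Hvz Hspan]]]]]]]]]]]]]]].
  set (S := fun x : R => exists a : G, x = nrm a \/ x = - nrm a) in *.
  assert (Sm : forall r, S (mulp r v)) by (intro r; apply Hmul, Hv).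
  assert (canc : forall x y w, S x -> S y -> S w -> addp x y = addp x w -> y = w).
  { intros x y w Sx Sy Sw E. destruct (Hinv x Sx) as [x' [Sx' Ex']].
    assert (F : forall y, S y -> addp x' (addp x y) = y).
    { intros y0 Sy0. rewrite Hassoc, (Hcomm x' x), Ex', Hcomm by auto. apply Hid, Sy0. }
    rewrite <- (F y Sy), <- (F w Sw), E. reflexivity. }
  assert (Hv0 : mulp 0 v = z).
  { apply (canc (mulp 0 v)); auto.
    rewrite Hid, <- HdistL, Rplus_0_r by auto. reflexivity. }
  exists v. split; [|split; [|split]].
  - intro u. apply Hspan. exists u. left. reflexivity.
  - intros r s E. destruct (Req_dec (r - s) 0) as [|Hrs]; [lra|exfalso].
    assert (E2 : mulp (r - s) v = z).
    { apply (canc (mulp s v)); auto.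
      rewrite <- HdistL, Hid by auto. replace (s + (r - s)) with r by ring. exact E. }
    apply Hvz. rewrite <- (Hm1 v Hv), <- (Rinv_l (r - s) Hrs), <- HmA, E2, <- Hv0 by auto.
    rewrite HmA by auto. rewrite Rmult_0_r. reflexivity.
  - intros r s. symmetry. apply HdistL, Hv.
  - intros r s. apply HmA, Hv.
Qed.

Lemma norm_scale_coord (u : G) : exists v al : R,
  (forall r, nrm (r ⊗ u) = mulp (Rabs r * al) v) /\
  (forall r s, mulp r v = mulp s v -> r = s) /\
  (forall r s, addp (mulp r v) (mulp s v) = mulp (r + s) v).
Proof.
  destruct norm_line as [v [Hcoord [Hinj [Hadd Hmul]]]].
  destruct (Hcoord u) as [al Hal]. exists v, al.
  split; [|split; assumption]. intro r. rewrite ggv7, Hal, Hmul. reflexivity.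
Qed.

Lemma norm_scale_eq (u : G) (s t : R) : 0 <= s -> 0 <= t ->
  nrm (s ⊗ u) = nrm (t ⊗ u) -> s = t \/ forall r, nrm (r ⊗ u) = nrm u.
Proof.
  intros Hs Ht E.
  destruct (norm_scale_coord u) as [v [al [Hsc [Hinj _]]]].
  rewrite !Hsc, !Rabs_pos_eq in E by assumption. apply Hinj in E.
  destruct (Req_dec al 0) as [Z|Z].
  - right. intro r. rewrite <- (ggv1 N G u) at 2. rewrite !Hsc, Z, !Rmult_0_r.
    reflexivity.
  - left. apply (Rmult_eq_reg_r al); assumption.
Qed.

(* GGV4 says that φ(2 ⊗ x) and φ(x) point in the same direction, so equal norms
   force 2 ⊗ x = x. *)
Lemma norm_eq_e (x : G) : nrm x = nrm e -> x = e.
Proof.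
  intro H. destruct (classic (x = e)) as [|Hx]; [assumption|exfalso].
  assert (H2 : nrm (2 ⊗ x) = nrm x).
  { destruct (norm_scale_eq x 1 0) as [|Hc]; try lra; [|apply Hc].
    rewrite ggv1, gyro_scale0. exact H. }
  destruct (Req_dec (nrm x) 0) as [Z|Z].
  - apply Hx, g_phi_inj. rewrite (nv_norm_eq0 N _ Z).
    rewrite H in Z. rewrite (nv_norm_eq0 N _ Z). reflexivity.
  - pose proof (ggv4 N G 2 x Hx ltac:(lra)) as E.
    rewrite Rabs_pos_eq, H2 in E by lra.
    apply (f_equal (nv_scal N (nrm x))) in E.
    rewrite !nv_scalA, Rinv_r, !nv_scal1 in E by exact Z.
    apply g_phi_inj in E. rewrite gyro_scale2 in E. rewrite <- (gyro_addr0 G x) in E at 3.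
    exact (Hx (gyro_addI G x _ _ E)).
Qed.

Lemma norm_scale_inj (u : G) (s t : R) : u <> e -> 0 <= s -> 0 <= t ->
  nrm (s ⊗ u) = nrm (t ⊗ u) -> s = t.
Proof.
  intros Hu Hs Ht E. destruct (norm_scale_eq u s t Hs Ht E) as [|Hc]; [assumption|].
  exfalso. apply Hu, norm_eq_e. rewrite <- (Hc 0), gyro_scale0. reflexivity.
Qed.

Lemma norm_scale_add (u : G) (s t : R) :
  addp (nrm (s ⊗ u)) (nrm (t ⊗ u)) = nrm ((Rabs s + Rabs t) ⊗ u).
Proof.
  destruct (norm_scale_coord u) as [v [al [Hsc [_ Hadd]]]].
  rewrite !Hsc, Hadd, (Rabs_pos_eq (Rabs s + Rabs t))
    by (pose proof (Rabs_pos s); pose proof (Rabs_pos t); lra).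
  f_equal. ring.
Qed.

Lemma norm_scale_le (u : G) (s t : R) : 0 <= s <= t -> nrm (s ⊗ u) <= nrm (t ⊗ u).
Proof.
  intro Hst. replace s with ((s + t) / 2 + (s - t) / 2) at 1 by field.
  rewrite ggv2. eapply Rle_trans; [apply ggv8|]. rewrite norm_scale_add.
  rewrite Rabs_pos_eq, Rabs_left1 by lra. right. do 3 f_equal. field.
Qed.

Lemma norm_e_le (x : G) : nrm e <= nrm x.
Proof. rewrite <- (gyro_scale0 G x). rewrite <- (ggv1 N G x) at 2. apply norm_scale_le. lra. Qed.

Lemma norm_opp (x : G) : nrm (⊖x) = nrm x.
Proof.
  rewrite gyro_opp_scale, ggv7. rewrite <- (ggv1 N G x) at 2. rewrite ggv7.
  f_equal. rewrite Rabs_R1, Rabs_left; lra.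
Qed.

(* A negative coordinate t would give ‖x ⊕ (-t) ⊗ y‖ ≤ ‖e‖ by GGV8, hence
   x = ⊖((-t) ⊗ y), whose norm has coordinate -t ≠ t. *)
Lemma norm_comparable (x y : G) : y <> e -> exists t, 0 <= t /\ nrm x = nrm (t ⊗ y).
Proof.
  intro Hy.
  destruct norm_line as [v [Hcoord [Hinj [Hadd Hmul]]]].
  destruct (Hcoord y) as [al Hal]. destruct (Hcoord x) as [be Hbe].
  assert (Hsc : forall r, nrm (r ⊗ y) = mulp (Rabs r * al) v)
    by (intro r; rewrite ggv7, Hal, Hmul; reflexivity).
  assert (He : nrm e = mulp 0 v)
    by (rewrite <- (gyro_scale0 G y), Hsc, Rabs_R0, Rmult_0_l; reflexivity).
  assert (Hal0 : al <> 0)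
    by (intro Z; apply Hy, norm_eq_e; rewrite He, Hal, Z; reflexivity).
  destruct (Rle_or_lt 0 (be / al)) as [Hp|Hn].
  - exists (be / al). split; [exact Hp|].
    rewrite Hsc, Hbe, Rabs_pos_eq by exact Hp. f_equal. field. exact Hal0.
  - exfalso. set (k := - (be / al)).
    assert (Hkal : k * al = - be) by (unfold k; field; exact Hal0).
    assert (Hxk : x ⊕ k ⊗ y = e).
    { apply norm_eq_e, Rle_antisym; [|apply norm_e_le].
      eapply Rle_trans; [apply ggv8|].
      rewrite Hsc, Hbe, Hadd, He, Rabs_pos_eq, Hkal by (unfold k; lra).
      right. f_equal. ring. }
    apply gyro_opp_unique, (f_equal (fun w => nrm w)) in Hxk.
    rewrite norm_opp, Hsc, Hbe, Rabs_pos_eq, Hkal in Hxk by (unfold k; lra).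
    apply Hinj in Hxk. assert (be = 0) by lra. subst be.
    unfold Rdiv in Hn. rewrite Rmult_0_l in Hn. lra.
Qed.

End NormLine.

Section Gyrometric.
Context {N : NormedSpace} (G : GGV N).
Local Notation e := (g_e N G).
Local Notation ρ := (gyrometric G).

Lemma gyrometric_addl (u x y : G) : ρ (u ⊕ x) (u ⊕ y) = ρ x y.
Proof.
  unfold gyrometric. rewrite <- (gyro_addNKr G x y) at 1.
  rewrite (g_gyroassoc N G u x), gyro_addKr. apply ggv0.
Qed.

Lemma gyrometric_addl_opp (a u x : G) : ρ (a ⊕ u) x = ρ u (⊖a ⊕ x).
Proof. rewrite <- (gyrometric_addl a u (⊖a ⊕ x)), gyro_addNKr. reflexivity. Qed.

Lemma gyrometric_add_r (a u : G) : ρ a (a ⊕ u) = nrm u.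
Proof. unfold gyrometric. rewrite gyro_addKr. reflexivity. Qed.

Lemma gyrometric_sym (x y : G) : ρ x y = ρ y x.
Proof.
  unfold gyrometric.
  rewrite <- (norm_opp G (⊖x ⊕ y)), gyro_oppD_gyr, gyro_oppK, ggv0. reflexivity.
Qed.

Lemma gyrometric_opp (x y : G) : ρ (⊖x) (⊖y) = ρ x y.
Proof. unfold gyrometric. rewrite <- (norm_opp G (⊖x ⊕ y)), gyro_oppD. reflexivity. Qed.

Lemma gyrometric_triangle (x y z : G) :
  ρ x z <= g_addp N G (ρ x y) (ρ y z).
Proof.
  unfold gyrometric. rewrite <- (gyro_addNKr G y z) at 1. rewrite g_gyroassoc.
  eapply Rle_trans; [apply ggv8|]. rewrite ggv0. right; reflexivity.
Qed.

Lemma gyrometric_xx (x : G) : ρ x x = nrm e.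
Proof. unfold gyrometric. rewrite g_left_inv. reflexivity. Qed.

Lemma gyrometric_eq_e (x y : G) : ρ x y = nrm e -> x = y.
Proof. intro H. apply gyro_sub_eq_e, norm_eq_e, H. Qed.

Definition isometric_bijection (g : G -> G) : Prop :=
  (forall x y, ρ (g x) (g y) = ρ x y) /\
  exists h, (forall x, h (g x) = x) /\ (forall x, g (h x) = x).

Lemma isometric_bijection_comp (g h : G -> G) :
  isometric_bijection g -> isometric_bijection h ->
  isometric_bijection (fun x => g (h x)).
Proof.
  intros [Hg [gi [Hg1 Hg2]]] [Hh [hi [Hh1 Hh2]]]. split.
  - intros x y. rewrite Hg, Hh. reflexivity.
  - exists (fun x => hi (gi x)). split; intro x; [rewrite Hg1, Hh1|rewrite Hh2, Hg2];
    reflexivity.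
Qed.

Lemma isometric_bijection_inverse (g : G -> G) : isometric_bijection g ->
  exists h, isometric_bijection h /\
    (forall x, h (g x) = x) /\ (forall x, g (h x) = x).
Proof.
  intros [Hg [h [Hhg Hgh]]]. exists h. split; [split|split; assumption].
  - intros x y. rewrite <- Hg, !Hgh. reflexivity.
  - exists g. split; assumption.
Qed.

End Gyrometric.

Lemma gyrometric_preserving_inverse {N1 N2 : NormedSpace}
  (G1 : GGV N1) (G2 : GGV N2) (T : G1 -> G2) :
  (forall y, exists x, T x = y) ->
  (forall a b, gyrometric G2 (T a) (T b) = gyrometric G1 a b) ->
  exists S : G2 -> G1, (forall x, S (T x) = x) /\ (forall y, T (S y) = y).
Proof.
  intros Hsurj Hiso.
  set (S := fun y => proj1_sig (constructive_indefinite_description _ (Hsurj y))).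
  assert (TS : forall y, T (S y) = y)
    by (intro y; exact (proj2_sig (constructive_indefinite_description _ (Hsurj y)))).
  exists S. split; [|exact TS]. intro x.
  apply gyrometric_eq_e. rewrite <- Hiso, TS, !gyrometric_xx.
  rewrite <- (gyrometric_xx G1 x), <- Hiso, gyrometric_xx. reflexivity.
Qed.

Lemma isometric_bijection_transport {N1 N2 : NormedSpace}
  (G1 : GGV N1) (G2 : GGV N2) (T : G1 -> G2) (S : G2 -> G1) (h : G2 -> G2) :
  (forall a b, gyrometric G2 (T a) (T b) = gyrometric G1 a b) ->
  (forall x, S (T x) = x) -> (forall y, T (S y) = y) ->
  isometric_bijection G2 h -> isometric_bijection G1 (fun x => S (h (T x))).
Proof.
  intros Hiso ST TS [Hh [hi [Hh1 Hh2]]]. split.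
  - intros x y. rewrite <- Hiso, !TS, Hh, Hiso. reflexivity.
  - exists (fun x => S (hi (T x))). split; intro x;
      [rewrite TS, Hh1, ST | rewrite TS, Hh2, ST]; reflexivity.
Qed.

Section MidpointReflection.
Context {N : NormedSpace} (G : GGV N).
Variables a b : G.
Local Notation e := (g_e N G).
Local Notation ρ := (gyrometric G).
Local Notation q := (gyromidpoint G a b).

Let d : G := (1/2) ⊗ (⊖a ⊕ b).

(* In the coordinates x = a ⊕ (d ⊕ w) centred at q, the map w ↦ ⊖w. *)
Definition midpoint_reflection (x : G) : G := a ⊕ (d ⊕ ⊖(⊖d ⊕ (⊖a ⊕ x))).
Local Notation ψ := midpoint_reflection.

Lemma reflection_involutive (x : G) : ψ (ψ x) = x.
Proof.
  unfold ψ. rewrite !gyro_addKr, gyro_oppK, !gyro_addNKr. reflexivity.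
Qed.

Lemma reflection_a : ψ a = b.
Proof.
  unfold ψ. rewrite g_left_inv, gyro_addr0, gyro_oppK.
  unfold d. rewrite <- gyro_scale2, gyro_scaleK by lra. apply gyro_addNKr.
Qed.

Lemma reflection_b : ψ b = a.
Proof. rewrite <- reflection_a at 1. apply reflection_involutive. Qed.

Lemma reflection_midpoint : ψ q = q.
Proof.
  rewrite gyromidpoint_eq. fold d. unfold ψ.
  rewrite gyro_addKr, g_left_inv, gyro_opp0, gyro_addr0. reflexivity.
Qed.

Lemma reflection_isometric (x y : G) : ρ (ψ x) (ψ y) = ρ x y.
Proof. unfold ψ. rewrite !gyrometric_addl, gyrometric_opp, !gyrometric_addl. reflexivity. Qed.

Lemma reflection_isometric_bijection : isometric_bijection G ψ.
Proof.
  split; [exact reflection_isometric|].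
  exists ψ. split; exact reflection_involutive.
Qed.

Lemma reflection_dist (x : G) : ρ (ψ x) x = g_mulp N G 2 (ρ q x).
Proof.
  rewrite gyromidpoint_eq. fold d. unfold ψ. rewrite !gyrometric_addl_opp.
  unfold gyrometric. rewrite gyro_oppK, <- gyro_scale2, ggv7, Rabs_pos_eq by lra.
  reflexivity.
Qed.

Lemma reflection_fixed (x : G) : ψ x = x -> x = q.
Proof.
  intro H. pose proof (reflection_dist x) as E.
  rewrite H, gyrometric_xx in E. unfold gyrometric in E.
  rewrite <- (Rabs_pos_eq 2), <- ggv7 in E by lra.
  symmetry in E. apply norm_eq_e, (f_equal (g_mul G (1/2))) in E.
  rewrite gyro_scaleK, gyro_scale_e in E by lra.
  symmetry. apply gyro_sub_eq_e, E.
Qed.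

(* Displacements of q are measured in units of ⊖a ⊕ b, so that they can be
   doubled and compared on the real line. *)
Definition displaces_midpoint (t : R) : Prop :=
  exists g, isometric_bijection G g /\ g a = a /\ g b = b /\
    ρ (g q) q = nrm (t ⊗ (⊖a ⊕ b)).

Lemma displaces_midpoint_le1 (t : R) : a <> b -> displaces_midpoint t -> t <= 1.
Proof.
  intros Hab [g [[Hg _] [Ha [_ Hq]]]].
  assert (Hw : ⊖a ⊕ b <> e) by (intro H; apply Hab, gyro_sub_eq_e, H).
  assert (Hqa : ρ a q = nrm ((1/2) ⊗ (⊖a ⊕ b)))
    by (rewrite gyromidpoint_eq; apply gyrometric_add_r).
  assert (Hgq : ρ (g q) q <= nrm (1 ⊗ (⊖a ⊕ b))).
  { assert (Hgqa : ρ (g q) a = ρ a q)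
      by (pose proof (Hg q a) as E; rewrite Ha in E; rewrite E; apply gyrometric_sym).
    eapply Rle_trans; [apply (gyrometric_triangle G _ a)|].
    rewrite Hgqa, Hqa, norm_scale_add.
    rewrite Rabs_pos_eq by lra. right. do 3 f_equal. field. }
  rewrite Hq in Hgq. destruct (Rle_or_lt t 1) as [|Hlt]; [assumption|exfalso].
  assert (Heq : nrm (t ⊗ (⊖a ⊕ b)) = nrm (1 ⊗ (⊖a ⊕ b)))
    by (apply Rle_antisym; [exact Hgq|apply norm_scale_le; lra]).
  assert (t = 1) by (apply (norm_scale_inj G (⊖a ⊕ b)); [exact Hw|lra|lra|exact Heq]).
  lra.
Qed.

(* ψ g⁻¹ ψ g moves q by ρ(ψ (g q), g q) = 2 ⊗' ρ(q, g q). *)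
Lemma displaces_midpoint_double (t : R) :
  displaces_midpoint t -> displaces_midpoint (2 * t).
Proof.
  intros [g [Hg [Ha [Hb Hq]]]].
  destruct (isometric_bijection_inverse G g Hg) as [h [Hh [Hhg Hgh]]].
  assert (Hha : h a = a) by (rewrite <- Ha at 1; apply Hhg).
  assert (Hhb : h b = b) by (rewrite <- Hb at 1; apply Hhg).
  exists (fun x => ψ (h (ψ (g x)))). split; [|split; [|split]].
  - apply isometric_bijection_comp; [exact reflection_isometric_bijection|].
    apply (isometric_bijection_comp G h); [exact Hh|].
    apply isometric_bijection_comp; [exact reflection_isometric_bijection|exact Hg].
  - rewrite Ha, reflection_a, Hhb. exact reflection_b.
  - rewrite Hb, reflection_b, Hha. exact reflection_a.
  - destruct Hg as [Hg _].
    rewrite <- reflection_midpoint at 2. rewrite reflection_isometric.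
    rewrite <- Hg, Hgh, reflection_dist, gyrometric_sym, Hq.
    rewrite ggv3, (ggv7 N G 2), Rabs_pos_eq by lra. reflexivity.
Qed.

Lemma isometric_bijection_fix_midpoint (g : G -> G) :
  isometric_bijection G g -> g a = a -> g b = b -> g q = q.
Proof.
  intros Hg Ha Hb. destruct (classic (a = b)) as [Eab|Hab].
  { rewrite <- Eab, gyromidpoint_same. exact Ha. }
  assert (Hw : ⊖a ⊕ b <> e) by (intro H; apply Hab, gyro_sub_eq_e, H).
  destruct (norm_comparable G (⊖ g q ⊕ q) (⊖a ⊕ b) Hw) as [t [Ht Et]].
  assert (Hk : forall k, displaces_midpoint (2 ^ k * t)).
  { induction k as [|k IH].
    - exists g. rewrite Rmult_1_l. exact (conj Hg (conj Ha (conj Hb Et))).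
    - rewrite <- tech_pow_Rmult, Rmult_assoc. apply displaces_midpoint_double, IH. }
  assert (t = 0).
  { apply pow2_scaled_bounded_eq0; [exact Ht|].
    intro k. exact (displaces_midpoint_le1 _ Hab (Hk k)). }
  subst t. rewrite gyro_scale0 in Et. apply gyrometric_eq_e, Et.
Qed.

End MidpointReflection.

Theorem theorem13 (N1 N2 : NormedSpace) (G1 : GGV N1) (G2 : GGV N2)
  (T : G1 -> G2)
  (T_surj : forall y : G2, exists x : G1, T x = y)
  (T_iso : forall a b : G1, gyrometric G2 (T a) (T b) = gyrometric G1 a b) :
  forall a b : G1, gyromidpoint G2 (T a) (T b) = T (gyromidpoint G1 a b).
Proof.
  intros a b.
  destruct (gyrometric_preserving_inverse G1 G2 T T_surj T_iso) as [S [ST TS]].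
  set (ψ1 := midpoint_reflection G1 a b).
  set (ψ2 := midpoint_reflection G2 (T a) (T b)).
  set (q := gyromidpoint G1 a b).
  assert (Hfix : ψ1 (S (ψ2 (T q))) = q).
  { apply (isometric_bijection_fix_midpoint G1 a b (fun x => ψ1 (S (ψ2 (T x))))).
    - apply isometric_bijection_comp; [apply reflection_isometric_bijection|].
      apply isometric_bijection_transport; [exact T_iso|exact ST|exact TS|].
      apply reflection_isometric_bijection.
    - unfold ψ1, ψ2. rewrite reflection_a, ST. apply reflection_b.
    - unfold ψ1, ψ2. rewrite reflection_b, ST. apply reflection_a. }
  apply (f_equal ψ1) in Hfix. unfold ψ1, q in Hfix.
  rewrite reflection_involutive, reflection_midpoint in Hfix.
  apply (f_equal T) in Hfix. rewrite TS in Hfix.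
  symmetry. apply reflection_fixed, Hfix.
Qed.
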